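(* There exist, for every (sufficiently large) $n$, positive real weights $w_n\ge\dots\ge w_1>0$ and a bound $B\in\{1,\dots,n\}$ such that RLS (defined in the context), started from a uniformly random initial search point in $\{0,1\}^n$ and minimising the penalised fitness \[ f(x)=\sum_{i=1}^n w_i x_i+\max\{0,\,B-b(x)\}\cdot(n w_n+1),\qquad b(x)=\sum_{i=1}^n x_i , \] has expected optimisation time $\Omega(n^2)$.
   Context: Problem: minimise $f_{\mathrm{obj}}(x)=\sum_{i=1}^n w_ix_i$ over $x\in\{0,1\}^n$ subject to the uniform constraint $x_1+\dots+x_n\ge B$. A search point is optimal if it satisfies the constraint and minimises $f_{\mathrm{obj}}$ among all points satisfying the constraint. RLS: maintain a current search point $x_t$ ($x_0$ uniform on $\{0,1\}^n$); in each iteration choose $b\in\{1,2\}$ uniformly at random, create $x'$ by flipping $b$ distinct bits of $x_t$ chosen uniformly at random; set $x_{t+1}=x'$ if $f(x')\le f(x_t)$, otherwise $x_{t+1}=x_t$. The optimisation time is the number of iterations until an optimal search point has been sampled for the first time. *)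

From HB Require Import structures.
From mathcomp Require Import all_boot all_order all_algebra.
From mathcomp Require Import Rstruct.
Set Implicit Arguments. Unset Strict Implicit. Unset Printing Implicit Defensive.
Import Order.TTheory GRing.Theory Num.Theory.
Local Open Scope ring_scope.

Notation R := Rdefinitions.R.

(* Search points: bit strings of length n, x_i for i : 'I_n
   (paper index i+1). Weights are given as w : nat -> R, with the paper's
   w_1,...,w_n being w 1, ..., w n. *)
Definition bits (n : nat) := {ffun 'I_n -> bool}.

Definition ones n (x : bits n) : nat := \sum_(i < n) (x i : nat).

Definition fobj n (w : nat -> R) (x : bits n) : R :=
  \sum_(i < n) (if x i then w i.+1 else 0).

Definition fpen n (w : nat -> R) (B : nat) (x : bits n) : R :=
  fobj w x + (B - ones x)%N%:R * (n%:R * w n + 1).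

Definition feasible n (B : nat) (x : bits n) : bool := (B <= ones x)%N.

Definition optimal n (w : nat -> R) (B : nat) (x : bits n) : bool :=
  feasible B x && [forall y : bits n, feasible B y ==> (fobj w x <= fobj w y)].

Definition ind (b : bool) : R := if b then 1 else 0.

Definition hdist n (x y : bits n) : nat := #|[set i : 'I_n | x i != y i]|.

(* mutation of RLS: b in {1,2} uniformly, then b distinct bits flipped
   uniformly at random: probability that offspring of x is y *)
Definition mut n (x y : bits n) : R :=
  (1 / 2) * (ind (hdist x y == 1)%N / ('C(n, 1))%:R)
  + (1 / 2) * (ind (hdist x y == 2)%N / ('C(n, 2))%:R).

Definition trans n (w : nat -> R) (B : nat) (x y : bits n) : R :=
  mut x y * ind (fpen w B y <= fpen w B x)
  + ind (y == x) * \sum_(z : bits n) mut x z * ind (fpen w B x < fpen w B z).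

(* q t y = Pr[x_0,...,x_t are all non-optimal and x_t = y],
   x_0 uniform on {0,1}^n *)
Fixpoint surv_mass n (w : nat -> R) (B : nat) (t : nat) (y : bits n) : R :=
  ind (~~ optimal w B y) *
  match t with
  | 0 => 1 / (2 ^ n)%:R
  | t'.+1 => \sum_(x : bits n) surv_mass w B t' x * trans w B x y
  end.

(* Pr[T > t], T = first t with x_t optimal (optimisation time) *)
Definition surv n (w : nat -> R) (B : nat) (t : nat) : R :=
  \sum_(y : bits n) surv_mass w B t y.
Arguments surv n w B t : clear implicits.

(* E[T] >= a, where E[T] = sum_{t >= 0} Pr[T > t] (possibly infinite):
   the partial sums (nondecreasing) have supremum >= a *)
Definition expected_time_ge n (w : nat -> R) (B : nat) (a : R) : Prop :=
  forall eps : R, 0 < eps ->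
    exists K : nat, a - eps <= \sum_(t < K) surv n w B t.
Arguments expected_time_ge n w B a : clear implicits.

From HB Require Import structures.
From mathcomp Require Import all_boot all_order all_algebra.
From mathcomp Require Import Rstruct.
From mathcomp Require Import ring lra zify.
Import Order.TTheory GRing.Theory Num.Theory.
Local Open Scope ring_scope.
Set Implicit Arguments. Unset Strict Implicit. Unset Printing Implicit Defensive.

(* With weights w_1 = 1, w_i = 2 for i >= 2 and bound B = 1, the unique optimum
   is the point whose only one-bit is the cheap bit 1 (bit [ord0] below).  Let
   n = m + 1 and let x have cheap bit 0 and k >= 1 ones.  Flipping a single one
   is accepted while k >= 2 and lowers k; the only accepted moves from x to a
   point with the cheap bit set are the swaps of the cheap bit with one of the k
   ones, each of probability 1/(n(n-1)).  The potential g(x) = r^k with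
   r = (n-1)/(n+1) (and g = 0 on all other points) makes the expected gain of
   the single flips exactly compensate the loss through the swaps when k >= 2,
   so E[g(x_(t+1)) | x_t] >= (1 - 1/(n(n-1))) g(x_t).  As g <= 1 vanishes on the
   optimum, Pr[T > t] >= (1 - 1/(n(n-1)))^t E[g(x_0)] with
   E[g(x_0)] >= ((1 + r)^(n-1) - 1)/2^n >= 1/16, and summing over t < n(n-1)
   gives E[T] >= (n(n-1) + 1)/32 >= n^2/64. *)

Lemma bin2_mul2 n : ('C(n, 2) * 2 = n * n.-1)%N.
Proof. by rewrite -[2%N]/(2`!) bin_ffact !ffactnS ffactn0 muln1. Qed.

Section RealInequalities.
Variable F : realFieldType.

Lemma bernoulli_le (y : F) k : 0 <= y <= 1 -> 1 - k%:R * y <= (1 - y) ^+ k.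
Proof.
case/andP=> y0 y1; elim: k => [|k IH]; first by rewrite expr0 mul0r subr0.
have pk : 0 <= (1 - y) ^+ k by apply: exprn_ge0; lra.
have k0 : 0 <= k%:R :> F by [].
rewrite exprS -natr1; nra.
Qed.

Lemma sum_geometric_ge (s : nat -> F) (a : F) K : (0 < K)%N -> 0 <= a ->
  (forall t, (1 - K%:R^-1) ^+ t * a <= s t) -> a * K.+1%:R / 2 <= \sum_(t < K) s t.
Proof.
move=> K0 a0 hs; have K0' : 0 < K%:R :> F by rewrite ltr0n.
have q01 : 0 <= (K%:R^-1 : F) <= 1.
  by rewrite invr_ge0 ltW //= invf_le1 // ler1n.
have step (t : 'I_K) : (1 - (t : nat)%:R / K%:R) * a <= s t.
  by apply: le_trans (hs t); apply: ler_wpM2r => //; exact: bernoulli_le.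
apply: le_trans (ler_sum _ (fun t _ => step t)).
rewrite -mulr_suml sumrB sumr_const card_ord -mulr_suml -natr_sum.
have -> : (\sum_(t < K) (t : nat))%N = 'C(K, 2) by rewrite -bin2_sum big_mkord.
have hC : 'C(K, 2)%:R = K%:R * (K%:R - 1) / 2 :> F.
  have e : 'C(K, 2)%:R * 2%:R = K%:R * (K%:R - 1) :> F.
    by rewrite -natrM bin2_mul2 natrM -subn1 natrB.
  by rewrite -e; field.
rewrite hC -natr1 [leRHS](_ : _ = a * (K%:R + 1) / 2) //.
by field; rewrite gt_eqF.
Qed.

Lemma ratio_expr_ge m : 1 / 4 <= (m.+1%:R / m.+2%:R) ^+ m :> F.
Proof.
have m2 : 0 < m.+2%:R :> F by rewrite ltr0n.
have -> : m.+1%:R / m.+2%:R = 1 - m.+2%:R^-1 :> F.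
  by rewrite -[m.+2%:R]natr1; field; move: m2; rewrite -natr1 => m2; lra.
have d01 : 0 <= (m.+2%:R^-1 : F) <= 1 by rewrite invr_ge0 ltW //= invf_le1 // ler1n.
set y := 1 - _; have y01 : 0 <= y <= 1.
  by rewrite /y subr_ge0 lerBlDr lerDl; case/andP: d01 => -> ->.
have [h /andP [hm hm2]] : exists h, (m <= h + h <= m.+2)%N.
  by exists (uphalf m); rewrite uphalf_half; move: (odd_double_half m); case: (odd m); lia.
have half_le : 1 / 2 <= y ^+ h.
  apply: le_trans (bernoulli_le h d01).
  have : h%:R / m.+2%:R <= 1 / 2 :> F.
    by rewrite ler_pdivrMr //; move: hm2; rewrite -(ler_nat F) natrD; lra.
  move: (h%:R / m.+2%:R) => u; lra.
have : y ^+ (h + h) <= y ^+ m by case/andP: y01 => y0 y1; apply: ler_wiXn2l.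
move=> h2m; apply: le_trans h2m; rewrite exprD.
have hp : 0 <= 1 / 2 :> F by lra.
have := ler_pM hp hp half_le half_le; lra.
Qed.
End RealInequalities.

Lemma ind_ge0 b : 0 <= ind b. Proof. by case: b; rewrite /ind. Qed.

Lemma sum_ind_in (T : finType) (A : {set T}) : \sum_(z : T) ind (z \in A) = #|A|%:R.
Proof. by rewrite -sumr_const [RHS]big_mkcond; apply: eq_bigr => z _; case: (z \in A). Qed.

Section Bits.
Variable n : nat.
Implicit Types (x y z : bits n) (i j : 'I_n).

Definition flip x j : bits n := [ffun i => if i == j then ~~ x i else x i].

Lemma bit_le_ones x i : ((x i : nat) <= ones x)%N.
Proof. by rewrite /ones (bigD1 i) //= leq_addr. Qed.

Definition support x := [set i | x i].

Lemma ones_card x : ones x = #|support x|.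
Proof.
rewrite /ones -sum1_card [RHS]big_mkcond; apply: eq_bigr => i _.
by rewrite inE; case: (x i).
Qed.

Lemma ones_le x : (ones x <= n)%N.
Proof.
rewrite /ones -[X in (_ <= X)%N]card_ord -sum1_card.
by apply: leq_sum => i _; case: (x i).
Qed.

Lemma ones_eq0 x : (ones x == 0%N) = (x == [ffun => false]).
Proof.
rewrite /ones sum_nat_eq0; apply/forallP/eqP => [x0|-> i]; last by rewrite ffunE.
by apply/ffunP => i; rewrite ffunE; case: (x i) (x0 i).
Qed.

Lemma ones_flip x j : (ones (flip x j) + x j = ones x + ~~ x j)%N.
Proof.
rewrite /ones (bigD1 j) //= [in RHS](bigD1 j) //= ffunE eqxx.
rewrite (eq_bigr (fun i => (x i : nat))) => [|i /negbTE hi]; last by rewrite ffunE hi.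
by case: (x j) => /=; lia.
Qed.

Lemma ones_lt x z i : (forall j, x j -> z j) -> ~~ x i -> z i -> (ones x < ones z)%N.
Proof.
move=> xz /negbTE xi zi; rewrite /ones (bigD1 i) //= [X in (_ < X)%N](bigD1 i) //= xi zi.
by rewrite add0n add1n ltnS; apply: leq_sum => j _; case xj: (x j); rewrite ?(xz _ xj).
Qed.

Lemma flip_inj x : injective (flip x).
Proof.
move=> j j' /ffunP/(_ j); rewrite !ffunE eqxx; case: eqP => // _; by case: (x j).
Qed.

Lemma hdist_flip x j : hdist x (flip x j) = 1%N.
Proof.
rewrite /hdist (_ : [set i | _] = [set j]) ?cards1 //; apply/setP => i.
by rewrite !inE ffunE; case: (i == j); case: (x i).
Qed.

Lemma hdist_flip2 x i j : i != j -> hdist x (flip (flip x i) j) = 2%N.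
Proof.
move=> ij; rewrite /hdist (_ : [set k | _] = [set i; j]) ?cards2 ?ij //.
apply/setP => k; rewrite !inE !ffunE.
have [->|_] := eqVneq k j.
  by rewrite orbT; case: ifP => [/eqP ji|_]; [rewrite ji eqxx in ij | case: (x j)].
by rewrite orbF; case: (k == i); case: (x k).
Qed.

Lemma sum_ind_hdist x k : \sum_z ind (hdist x z == k) = 'C(n, k)%:R.
Proof.
pose h (S : {set 'I_n}) : bits n := [ffun i => x i (+) (i \in S)].
have hK S : [set i | x i != h S i] = S.
  by apply/setP => i; rewrite inE ffunE; case: (x i); case: (i \in S).
have h_bij : bijective h.
  exists (fun z => [set i | x i != z i]) => // z.
  by apply/ffunP => i; rewrite ffunE inE; case: (x i); case: (z i).
rewrite (reindex h) /=; last exact: onW_bij.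
rewrite /hdist (eq_bigr (fun S => ind (S \in [set S : {set 'I_n} | #|S| == k]))).
  by rewrite sum_ind_in card_draws card_ord.
by move=> S _; rewrite hK inE.
Qed.

Lemma mut_ge0 x z : 0 <= mut x z.
Proof.
by rewrite /mut; apply: addr_ge0; apply: mulr_ge0 => //; apply: divr_ge0; rewrite ?ind_ge0.
Qed.

Lemma mut_hdist1 x z : hdist x z = 1%N -> mut x z = 2^-1 * n%:R^-1.
Proof. by move=> h; rewrite /mut h bin1 /ind /= !mul0r mulr0 addr0 !div1r. Qed.

Lemma mut_hdist2 x z : hdist x z = 2%N -> mut x z = (n * n.-1)%:R^-1.
Proof.
by move=> h; rewrite /mut h /ind /= !mul0r mulr0 add0r -bin2_mul2 natrM invfM !div1r mulrC.
Qed.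

Lemma mut_hdist_gt2 x z : (2 < hdist x z)%N -> mut x z = 0.
Proof.
move=> h; rewrite /mut /ind.
have [/negbTE -> /negbTE ->] : (hdist x z != 1%N) /\ (hdist x z != 2%N) by split; lia.
by rewrite !mul0r mulr0 addr0.
Qed.

Lemma sum_mut x : (1 < n)%N -> \sum_z mut x z = 1.
Proof.
move=> n_gt1; rewrite /mut big_split /= -!mulr_sumr -!mulr_suml !sum_ind_hdist.
have C1 : 'C(n, 1)%:R != 0 :> R by rewrite bin1 pnatr_eq0 -lt0n ltnW.
have C2 : 'C(n, 2)%:R != 0 :> R by rewrite pnatr_eq0 -lt0n bin_gt0.
by rewrite !divff //; lra.
Qed.

End Bits.

Section RLS.
Variables (n : nat) (w : nat -> R) (B : nat).
Implicit Types (x y z : bits n) (g : bits n -> R).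

Lemma trans_ge0 x y : 0 <= trans w B x y.
Proof.
apply: addr_ge0; apply: mulr_ge0; rewrite ?mut_ge0 ?ind_ge0 //.
by apply: sumr_ge0 => z _; rewrite mulr_ge0 ?mut_ge0 ?ind_ge0.
Qed.

Lemma surv_mass_ge0 t y : 0 <= surv_mass w B t y.
Proof.
elim: t y => [|t IH] y /=; rewrite mulr_ge0 ?ind_ge0 //; first by rewrite divr_ge0.
by apply: sumr_ge0 => x _; rewrite mulr_ge0 ?trans_ge0.
Qed.

Lemma sum_trans_mul g x : (1 < n)%N ->
  \sum_y trans w B x y * g y =
  g x + \sum_z mut x z * ind (fpen w B z <= fpen w B x) * (g z - g x).
Proof.
move=> n_gt1; rewrite /trans; under eq_bigr do rewrite mulrDl.
set S := \sum_z mut x z * ind (fpen w B x < fpen w B z).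
have stay : \sum_y ind (y == x) * S * g y = S * g x.
  by rewrite (bigD1 x) //= eqxx big1 => [|y /negbTE->]; rewrite /ind ?mul1r ?addr0 ?mul0r.
have rejected : S = 1 - \sum_z mut x z * ind (fpen w B z <= fpen w B x).
  rewrite -(sum_mut x n_gt1) -sumrB; apply: eq_bigr => z _.
  by rewrite ltNge /ind; case: (_ <= _) => /=; rewrite ?mulr0 ?mulr1 ?subr0 ?subrr.
rewrite big_split /= stay rejected mulrBl mul1r.
under [in RHS]eq_bigr do rewrite mulrBr.
by rewrite sumrB mulr_suml; lra.
Qed.

Section Potential.
Variables (g : bits n -> R) (q : R).
Hypotheses (q_ge0 : 0 <= q) (g_le1 : forall y, g y <= 1).
Hypothesis g_nonopt : forall y, g y != 0 -> ~~ optimal w B y.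
Hypothesis g_drift : forall x, q * g x <= \sum_y trans w B x y * g y.

Let weighted_mass t := \sum_y surv_mass w B t y * g y.

Lemma ind_nonopt_mul y : ind (~~ optimal w B y) * g y = g y.
Proof.
by have [->|/g_nonopt/negbTE->] := eqVneq (g y) 0; rewrite ?mulr0 ?mul1r.
Qed.

Lemma weighted_mass_step t : q * weighted_mass t <= weighted_mass t.+1.
Proof.
rewrite /weighted_mass /=.
under [X in _ <= X]eq_bigr do rewrite mulrAC ind_nonopt_mul mulrC mulr_suml.
rewrite exchange_big mulr_sumr; apply: ler_sum => x _ /=.
under [X in _ <= X]eq_bigr do rewrite -mulrA.
by rewrite -mulr_sumr mulrCA ler_wpM2l ?surv_mass_ge0.
Qed.

Lemma weighted_mass0 : weighted_mass 0 = (\sum_y g y) / (2 ^ n)%:R.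
Proof.
rewrite /weighted_mass mulr_suml; apply: eq_bigr => y _ /=.
by rewrite mulrAC ind_nonopt_mul div1r.
Qed.

Lemma surv_ge_geometric t : q ^+ t * ((\sum_y g y) / (2 ^ n)%:R) <= surv n w B t.
Proof.
have weighted_mass_le_surv : weighted_mass t <= surv n w B t.
  by apply: ler_sum => y _; rewrite ler_piMr ?surv_mass_ge0.
apply: le_trans weighted_mass_le_surv; rewrite -weighted_mass0.
elim: t => [|t IH]; first by rewrite expr0 mul1r.
by rewrite exprS -mulrA (le_trans _ (weighted_mass_step t)) // ler_wpM2l.
Qed.

End Potential.
End RLS.

Definition wt (i : nat) : R := if i == 1%N then 1 else 2.

Lemma wt_gt0 i : 0 < wt i.
Proof. by rewrite /wt; case: ifP. Qed.

Lemma wt_le i j : (1 <= i <= j)%N -> wt i <= wt j.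
Proof.
case/andP=> i1 ij; rewrite /wt; case: ifP => [_|/eqP i_neq1]; first by case: ifP => _; lra.
by rewrite ifN; [lra | apply/eqP; lia].
Qed.

Section Instance.
Variable m : nat.
Hypothesis m_gt1 : (1 < m)%N.
Implicit Types (x y z : bits m.+1) (r : R).

Lemma fobj_wt x : fobj wt x = 2 * (ones x)%:R - ind (x ord0).
Proof.
rewrite /fobj big_ord_recl /ones big_ord_recl /= natrD natr_sum mulrDr mulr_sumr.
rewrite (eq_bigr (fun i => 2 * ((x (lift ord0 i) : nat))%:R)) => [|i _]; last first.
  by rewrite /wt /=; case: (x _); rewrite ?mulr1 ?mulr0.
by rewrite /wt /ind /=; case: (x ord0) => /=; lra.
Qed.

Lemma fpen_wt x :
  fpen wt 1 x = 2 * (ones x)%:R - ind (x ord0) + ind (ones x == 0%N) * (2 * m.+1%:R + 1).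
Proof.
rewrite /fpen fobj_wt /wt ifN ?eqSS -?lt0n ?(ltnW m_gt1) // [_ * 2]mulrC.
by congr (_ + _ * _); case: (ones x).
Qed.

Definition potential r x : R := if x ord0 || (ones x == 0%N) then 0 else r ^+ ones x.

Lemma potential_ge0 r x : 0 <= r -> 0 <= potential r x.
Proof. by move=> r0; rewrite /potential; case: ifP => // _; rewrite exprn_ge0. Qed.

Lemma potential_le1 r x : 0 <= r <= 1 -> potential r x <= 1.
Proof. by case/andP=> r0 r1; rewrite /potential; case: ifP => // _; rewrite exprn_ile1. Qed.

Lemma potential_nonopt r x : potential r x != 0 -> ~~ optimal wt 1 x.
Proof.
rewrite /potential; case: ifP => [_|/norP [/negbTE x0 kx] _]; first by rewrite eqxx.
apply/negP => /andP [_ /forallP /(_ (flip [ffun => false] ord0))].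
have e_ones : ones (flip [ffun => false] ord0 : bits m.+1) = 1%N.
  have ones0 : ones ([ffun => false] : bits m.+1) = 0%N.
    by rewrite /ones big1 // => i; rewrite ffunE.
  by have := @ones_flip m.+1 [ffun => false] ord0; rewrite ones0 !ffunE /= addn0.
rewrite /feasible e_ones /= !fobj_wt e_ones x0 !ffunE eqxx /ind /=.
have : 1 <= (ones x)%:R :> R by rewrite ler1n lt0n.
lra.
Qed.

Definition ratio : R := m%:R / m.+2%:R.

Lemma ratio01 : 0 <= ratio <= 1.
Proof. by rewrite /ratio divr_ge0 //= ler_pdivrMr ?ltr0n // mul1r ler_nat ltnW. Qed.

Section Moves.
Variable x : bits m.+1.
Hypotheses (x0 : x ord0 = false) (x_ones : (0 < ones x)%N).

Lemma accepted_ones z : fpen wt 1 z <= fpen wt 1 x ->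
  (0 < ones z)%N /\ (2 * ones z <= 2 * ones x + z ord0)%N.
Proof.
move=> acc; have z_ones : (0 < ones z)%N.
  rewrite lt0n; apply/negP => /eqP kz0.
  move: acc (bit_le_ones z ord0) (ones_le x).
  rewrite !fpen_wt kz0 x0 (gtn_eqF x_ones) /ind /=; case: (z ord0) => //= acc _ kx.
  have : (2 * m.+1 + 1)%:R <= (2 * ones x)%:R :> R.
    by move: acc; rewrite natrD !natrM !subr0 mulr0 mul1r mul0r !addr0 add0r.
  by rewrite ler_nat; lia.
split => //; move: acc; rewrite !fpen_wt x0 (gtn_eqF x_ones) (gtn_eqF z_ones) /ind.
by rewrite -(ler_nat R) natrD !natrM; case: (z ord0) => /=; lra.
Qed.

Definition down_moves := [set flip x j | j in support x].
Definition swap_moves := [set flip (flip x ord0) j | j in support x].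

Lemma support_neq0 j : j \in support x -> ord0 != j.
Proof. by apply: contraTneq => <-; rewrite inE x0. Qed.

Lemma down_moves_ord0 z : z \in down_moves -> z ord0 = false.
Proof.
case/imsetP => j /support_neq0 j0 ->; rewrite ffunE.
by case: ifP => [/eqP e|_]; [rewrite e eqxx in j0 | rewrite x0].
Qed.

Lemma swap_moves_ord0 z : z \in swap_moves -> z ord0.
Proof.
case/imsetP => j /support_neq0 j0 ->; rewrite !ffunE.
by case: ifP => [/eqP e|_]; [rewrite e eqxx in j0 | rewrite x0].
Qed.

Lemma card_down_moves : #|down_moves| = ones x.
Proof. by rewrite card_imset ?ones_card //; exact: flip_inj. Qed.

Lemma card_swap_moves : #|swap_moves| = ones x.
Proof. by rewrite card_imset ?ones_card //; exact: flip_inj. Qed.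

Lemma accepted_swap z : z ord0 -> fpen wt 1 z <= fpen wt 1 x -> (hdist x z <= 2)%N ->
  z \in swap_moves.
Proof.
move=> z0 acc hd; have [_] := accepted_ones acc; rewrite z0 => kz.
have [j /andP [xj zj]] : exists j, x j && ~~ z j.
  apply/existsP; apply: contraT; rewrite negb_exists => /forallP xz.
  suff : (ones x < ones z)%N by lia.
  apply: (@ones_lt _ _ _ ord0) => [j xj||//]; last by rewrite x0.
  by move: (xz j); rewrite xj /= negbK.
have j0 : j != ord0 by apply: contraTneq xj => ->; rewrite x0.
have diff : [set i | x i != z i] = [set ord0; j].
  apply/esym/eqP; rewrite eqEcard cards2 eq_sym j0 (leq_trans hd) ?andbT //.
  apply/subsetP => i; rewrite !inE => /orP [] /eqP ->; first by rewrite x0 z0.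
  by rewrite xj; case: (z j) zj.
apply/imsetP; exists j; first by rewrite inE.
apply/ffunP => i; move/setP/(_ i): diff; rewrite !inE !ffunE.
have [->|_] := eqVneq i j; first by rewrite (negbTE j0) orbT; case: (x j); case: (z j).
by rewrite orbF; case: (i == ord0); case: (x i); case: (z i).
Qed.

Section Gain.
Variable r : R.
Hypothesis r01 : 0 <= r <= 1.

Let gain z := mut x z * ind (fpen wt 1 z <= fpen wt 1 x) * (potential r z - potential r x).

Let gain_coef :=
  if (1 < ones x)%N then 2^-1 * m.+1%:R^-1 * (r ^+ (ones x).-1 - r ^+ ones x) else 0.
Let loss_coef := (m.+1 * m)%:R^-1 * r ^+ ones x.

Lemma potentialE : potential r x = r ^+ ones x.
Proof. by rewrite /potential x0 (gtn_eqF x_ones). Qed.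

Lemma gain_down j : x j -> (1 < ones x)%N -> gain (flip x j) = gain_coef.
Proof.
move=> xj kx; rewrite /gain_coef kx.
have := ones_flip x j; rewrite xj addn1 addn0 => ones_z.
have zj0 : flip x j ord0 = false by apply/down_moves_ord0/imset_f; rewrite inE.
have kz0 : ones (flip x j) != 0%N by rewrite -lt0n -ltnS ones_z.
rewrite /gain mut_hdist1 ?hdist_flip // potentialE /potential zj0 (negbTE kz0) -ones_z /=.
rewrite !fpen_wt x0 zj0 (negbTE kz0) -ones_z /ind /= ifT ?mulr1 //.
by rewrite !subr0 !mul0r !addr0 ler_wpM2l ?ler_nat.
Qed.

Lemma loss_coef_ge0 : 0 <= loss_coef.
Proof. by case/andP: r01 => r0 _; rewrite mulr_ge0 ?invr_ge0 ?exprn_ge0. Qed.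

Lemma gain_swap_ge z : z ord0 -> - loss_coef * ind (z \in swap_moves) <= gain z.
Proof.
move=> z0; have lhs_le0 : - loss_coef * ind (z \in swap_moves) <= 0.
  by rewrite mulNr oppr_le0 mulr_ge0 ?ind_ge0 ?loss_coef_ge0.
rewrite /gain potentialE /potential z0 /= sub0r mulrN.
case acc: (fpen wt 1 z <= fpen wt 1 x); last by rewrite /ind mulr0 mul0r oppr0.
have [hd|hd] := leqP (hdist x z) 2; last by rewrite mut_hdist_gt2 // !mul0r oppr0.
have z_swap := accepted_swap z0 acc hd; rewrite z_swap.
have /imsetP [j /support_neq0 j0 ->] := z_swap.
by rewrite mut_hdist2 ?hdist_flip2 // /ind /= !mulr1.
Qed.

Lemma gain_ge0 z : ~~ z ord0 -> 0 <= gain z.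
Proof.
move=> /negbTE z0; rewrite /gain.
case acc: (fpen wt 1 z <= fpen wt 1 x); last by rewrite /ind mulr0 mul0r.
have [z_ones] := accepted_ones acc; rewrite z0 addn0 => kz.
rewrite /ind mulr1 mulr_ge0 ?mut_ge0 // subr_ge0 potentialE /potential z0 (gtn_eqF z_ones) /=.
by case/andP: r01 => r0 r1; apply: ler_wiXn2l => //; lia.
Qed.

Lemma gain_ge z :
  gain_coef * ind (z \in down_moves) - loss_coef * ind (z \in swap_moves) <= gain z.
Proof.
case z0: (z ord0).
  have /negbTE -> : z \notin down_moves by apply: contraTN z0 => /down_moves_ord0 ->.
  by rewrite /ind mulr0 sub0r -mulNr gain_swap_ge.
have /negbTE -> : z \notin swap_moves by apply: contraFN z0 => /swap_moves_ord0.
rewrite /ind mulr0 subr0.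
have [kx|kx] := ltnP 1 (ones x).
  case: ifP => [/imsetP [j]|]; last by rewrite mulr0 gain_ge0 ?z0.
  by rewrite inE => xj ->; rewrite mulr1 gain_down.
by rewrite /gain_coef ifN -?leqNgt // mul0r gain_ge0 ?z0.
Qed.

Lemma gain_coef_balanced : r = ratio -> (1 < ones x)%N -> gain_coef = loss_coef.
Proof.
move=> r_eq kx; rewrite /gain_coef /loss_coef kx -(prednK x_ones) /=.
rewrite r_eq /ratio exprS natrM -[m.+2%:R]natr1 -[m.+1%:R]natr1; field.
by rewrite !natr1 !pnatr_eq0 /= -lt0n ltnW.
Qed.

Lemma drift_nondegenerate : r = ratio ->
  (1 - (m.+1 * m)%:R^-1) * potential r x <= \sum_y trans wt 1 x y * potential r y.
Proof.
move=> r_eq; have sum_gain : (gain_coef - loss_coef) * (ones x)%:R <= \sum_z gain z.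
  rewrite mulrBl -{1}card_down_moves -card_swap_moves -!sum_ind_in !mulr_sumr -sumrB.
  by apply: ler_sum => z _; exact: gain_ge.
rewrite sum_trans_mul ?ltnS ?(ltnW m_gt1) //.
apply: le_trans (lerD (lexx _) sum_gain); rewrite potentialE.
have [kx|kx] := ltnP 1 (ones x).
  rewrite gain_coef_balanced // subrr mul0r addr0 mulrBl mul1r lerBlDr lerDl.
  exact: loss_coef_ge0.
rewrite /gain_coef /loss_coef ifN -?leqNgt //; have -> : ones x = 1%N by lia.
by move: (_%:R^-1) => q; lra.
Qed.

End Gain.
End Moves.

Lemma drift x :
  (1 - (m.+1 * m)%:R^-1) * potential ratio x <= \sum_y trans wt 1 x y * potential ratio y.
Proof.
have [r0 _] := andP ratio01.
case: (boolP (x ord0 || (ones x == 0%N))) => [degenerate|/norP [/negbTE x0]].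
  rewrite /potential degenerate mulr0; apply: sumr_ge0 => y _.
  by rewrite mulr_ge0 ?trans_ge0 ?potential_ge0.
by rewrite -lt0n => x_ones; apply: drift_nondegenerate ratio01 _.
Qed.

(* [r ^+ ones y] on the points with cheap bit 0, in product form so that its sum
   over all [y] factorises. *)
Definition weight r y := \prod_(i < m.+1) (if y i then (if i == ord0 then 0 else r) else 1).

Lemma sum_weight r : \sum_y weight r y = (1 + r) ^+ m.
Proof.
pose F (i : 'I_m.+1) (b : bool) := if b then (if i == ord0 then 0 else r) else 1.
rewrite /weight -(bigA_distr_bigA F) /=.
rewrite big_ord_recl /= big_bool /= add0r mul1r -[m in RHS]card_ord -prodr_const.
by apply: eq_bigr => i _; rewrite big_bool /= addrC.
Qed.

Lemma weight_le r y : 0 <= r -> weight r y <= potential r y + ind (y == [ffun => false]).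
Proof.
move=> r0; rewrite /weight big_ord_recl /potential /=.
case y0: (y ord0); first by rewrite mul0r add0r ind_ge0.
have -> : \prod_(i < m) (if y (lift ord0 i) then (if lift ord0 i == ord0 then 0 else r) else 1)
    = r ^+ ones y.
  rewrite /ones big_ord_recl y0 add0n -prodrXr; apply: eq_bigr => i _; by case: (y _).
rewrite mul1r; case: (boolP (ones y == 0%N)) => [k0|_]; last by rewrite lerDl ind_ge0.
by rewrite (eqP k0) expr0 add0r -ones_eq0 k0.
Qed.

Lemma sum_potential_ge r : 0 <= r -> (1 + r) ^+ m - 1 <= \sum_y potential r y.
Proof.
move=> r0; rewrite -sum_weight lerBlDr.
have -> : 1 = \sum_(y : bits m.+1) ind (y == [ffun => false]).
  by rewrite (bigD1 [ffun => false]) //= eqxx big1 ?addr0 // => y /negbTE ->.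
by rewrite -big_split; apply: ler_sum => y _; exact: weight_le.
Qed.

Lemma initial_potential : (2 < m)%N -> 1 / 16 <= (\sum_y potential ratio y) / (2 ^ m.+1)%:R.
Proof.
move=> m_gt2; have [r0 _] := andP ratio01.
have one_ratio : 1 + ratio = 2 * (m.+1%:R / m.+2%:R).
  rewrite /ratio -[m.+2%:R]natr1 -[m.+1%:R]natr1; field.
  by rewrite !natr1 pnatr_eq0.
have := sum_potential_ge r0; rewrite one_ratio exprMn.
have := ratio_expr_ge R m; move: (_ ^+ m) => Y quarter.
have : 8 <= 2 ^+ m :> R.
  by rewrite -[8]/(2 ^ 3)%:R natrX ler_eXn2l ?ltr1n.
rewrite natrX exprS; move: (2 ^+ m) (\sum_y _) => P S P8 sum_ge.
rewrite ler_pdivlMr; last lra.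
nra.
Qed.

End Instance.

Theorem theorem4 :
  exists c : R, 0 < c /\
  exists N : nat, forall n : nat, (N <= n)%N ->
    exists (w : nat -> R) (B : nat),
      (forall i, (1 <= i <= n)%N -> 0 < w i) /\
      (forall i j, (1 <= i)%N -> (i <= j)%N -> (j <= n)%N -> w i <= w j) /\
      (1 <= B <= n)%N /\
      expected_time_ge n w B (c * (n ^ 2)%:R).
Proof.
exists (1 / 64); split; first lra.
exists 4%N => -[//|m] m_gt2; exists wt, 1%N.
split; first by move=> i _; exact: wt_gt0.
split; first by move=> i j i1 ij _; apply: wt_le; rewrite i1.
split; first by [].
have m_gt1 : (1 < m)%N by rewrite ltnW.
have K_gt0 : (0 < m.+1 * m)%N by rewrite muln_gt0 /= ltnW.
have q_ge0 : 0 <= 1 - (m.+1 * m)%:R^-1 :> R by rewrite subr_ge0 invf_le1 ?ler1n ?ltr0n.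
have surv_geom t : (1 - (m.+1 * m)%:R^-1) ^+ t * (1 / 16) <= surv m.+1 wt 1 t.
  apply: le_trans (surv_ge_geometric q_ge0 _ (@potential_nonopt m _) (drift m_gt1) t).
    by rewrite ler_wpM2l ?initial_potential ?exprn_ge0.
  by move=> y; apply: potential_le1; exact: ratio01.
move=> eps eps_gt0; exists (m.+1 * m)%N.
apply: le_trans (sum_geometric_ge K_gt0 _ surv_geom); last lra.
have : ((m.+1 ^ 2)%N%:R : R) <= 2 * (m.+1 * m).+1%:R by rewrite -natrM ler_nat; nia.
lra.
Qed.
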